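(* Let $P$ be a forest with duplications on $\{1,2,\ldots,n\}$, fix a sequence of operations constructing $P$, and let $\mathcal{D}(P)$ be the set of pairs $\{a,a'\}$ created by the duplication steps of this construction. Then: (i) the pairs in $\mathcal{D}(P)$ are pairwise disjoint: for $\{a,a'\},\{b,b'\}\in\mathcal{D}(P)$, either $\{a,a'\}=\{b,b'\}$ or $\{a,a'\}\cap\{b,b'\}=\varnothing$; (ii) the nonempty connected order ideals of $P$ are exactly the principal ideals $P_{\le p}$ for $p\in P$ and the unions $P_{\le a}\cup P_{\le a'}$ for $\{a,a'\}\in\mathcal{D}(P)$; (iii) the pairs $\{J_1,J_2\}$ of connected order ideals of $P$ intersecting nontrivially are exactly the pairs $\{P_{\le a},P_{\le a'}\}$ for $\{a,a'\}\in\mathcal{D}(P)$. In particular $\mathcal{D}(P)$ does not depend on the chosen construction.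
   Context: All posets are finite. Forests with duplications are the posets obtainable from one-element posets by iterating: (1) disjoint union; (2) hanging $P_2$ below an element $a\in P_1$: on $P_1\sqcup P_2$ add relations $p_2<b$ for all $p_2\in P_2$ and all $b\ge_{P_1}a$; (3) duplication of a hanger: $a\in P$ is a hanger if $P_{<a}\ne\varnothing$ and every path in the Hasse diagram of $P$ from an element of $P_{<a}$ to an element of $P\setminus P_{\le a}$ passes through $a$; duplicating it forms the poset on $P\sqcup\{a'\}$ with the relations of $P$ plus $p<a'$ whenever $p<_Pa$ and $a'<p$ whenever $a<_Pp$; the pair $\{a,a'\}$ is the duplication pair created by this step. An order ideal is a downward-closed subset; a connected order ideal is a nonempty order ideal whose induced Hasse diagram is connected; $P_{\le p}=\{q:q\le_Pp\}$. Two connected order ideals intersect trivially if they are disjoint or nested, and nontrivially otherwise. *)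

From mathcomp Require Import all_boot.
Set Implicit Arguments. Unset Strict Implicit. Unset Printing Implicit Defensive.

(* A finite poset is represented by a carrier X : {set T} (T a finite type)
   and a relation le : rel T, read as "p <= q"; it is reflexive on X and
   false outside X x X for all posets built below. *)

Section Defs.
Variable T : finType.

Definition lt (le : rel T) (p q : T) : bool := le p q && (p != q).

Definition covers (X : {set T}) (le : rel T) (p q : T) : bool :=
  [&& p \in X, q \in X, lt le p q & [forall z in X, ~~ (lt le p z && lt le z q)]].

Definition hasse (X : {set T}) (le : rel T) : rel T :=
  fun p q => covers X le p q || covers X le q p.

Definition down (X : {set T}) (le : rel T) (p : T) : {set T} :=
  [set q in X | le q p].
Definition sdown (X : {set T}) (le : rel T) (p : T) : {set T} :=
  [set q in X | lt le q p].

Definition hanger (X : {set T}) (le : rel T) (a : T) : Prop :=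
  [/\ a \in X, sdown X le a != set0 &
     forall (s : T) (w : seq T),
       s \in sdown X le a -> path (hasse X le) s w ->
       last s w \in X :\: down X le a -> a \in s :: w].

Definition le_one (x : T) : rel T := fun p q => (p == x) && (q == x).
Definition le_union (le1 le2 : rel T) : rel T := fun p q => le1 p q || le2 p q.
Definition le_hang (le1 : rel T) (X2 : {set T}) (le2 : rel T) (a : T) : rel T :=
  fun p q => [|| le1 p q, le2 p q | (p \in X2) && le1 a q].
Definition le_dup (le : rel T) (a a' : T) : rel T :=
  fun p q => [|| le p q,
                 (q == a') && ((p == a') || ((p != a) && le p a))
               | (p == a') && (q != a) && le a q].

(* fwd X le D : (X, le) is a forest with duplications, obtained by a
   construction whose duplication steps created the pairs listed in D. *)
Inductive fwd : {set T} -> rel T -> seq (T * T) -> Prop :=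
| fwd_one x : fwd [set x] (le_one x) [::]
| fwd_union X1 le1 D1 X2 le2 D2 :
    fwd X1 le1 D1 -> fwd X2 le2 D2 -> [disjoint X1 & X2] ->
    fwd (X1 :|: X2) (le_union le1 le2) (D1 ++ D2)
| fwd_hang X1 le1 D1 X2 le2 D2 a :
    fwd X1 le1 D1 -> fwd X2 le2 D2 -> [disjoint X1 & X2] -> a \in X1 ->
    fwd (X1 :|: X2) (le_hang le1 X2 le2 a) (D1 ++ D2)
| fwd_dup X le D a a' :
    fwd X le D -> hanger X le a -> a' \notin X ->
    fwd (a' |: X) (le_dup le a a') ((a, a') :: D).

Definition pairset (x : T * T) : {set T} := [set x.1; x.2].

Definition order_ideal (X : {set T}) (le : rel T) (J : {set T}) : bool :=
  (J \subset X) && [forall q in J, forall p in X, le p q ==> (p \in J)].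

Definition connected_ideal (X : {set T}) (le : rel T) (J : {set T}) : Prop :=
  [/\ J != set0, order_ideal X le J &
     forall x y, x \in J -> y \in J ->
       exists w : seq T, [/\ path (hasse X le) x w, last x w = y & all (mem J) w]].

Definition intersect_trivially (J1 J2 : {set T}) : bool :=
  [|| [disjoint J1 & J2], J1 \subset J2 | J2 \subset J1].

End Defs.

From mathcomp Require Import all_boot.
Set Implicit Arguments. Unset Strict Implicit. Unset Printing Implicit Defensive.

(* Every poset built by the three operations satisfies an invariant: two
   elements with a common lower bound are comparable or form a duplication
   pair, duplication pairs are incomparable with a common lower bound, and
   each element has at most one partner.  Union and hanging preserve it
   componentwise.  Duplicating a into a' preserves it because the new order is
   the pullback of the old one along the map sending a' to a, and because a
   hanger a belongs to no earlier pair: an element incomparable to a with a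
   common lower bound z would be reached from z by an upward Hasse path
   avoiding a.
   Given the invariant, let m be maximal in a connected ideal J.  Moving along
   Hasse edges inside J, every element stays below m or below the partner of
   m, so J is P_{<=m} or P_{<=m} u P_{<=m'}.  The union of two nontrivially
   intersecting connected ideals is connected, hence of the second form, and
   this forces the two ideals to be P_{<=m} and P_{<=m'}.  The duplication
   pairs are thus read off the order alone. *)

Section ForestsWithDuplications.
Variable T : finType.
Implicit Types (X J : {set T}) (le : rel T) (D : seq (T * T)).

Definition paired D (p q : T) : bool := ((p, q) \in D) || ((q, p) \in D).

Lemma paired_sym D p q : paired D p q = paired D q p.
Proof. by rewrite /paired orbC. Qed.

Lemma paired_cat D1 D2 p q : paired (D1 ++ D2) p q = paired D1 p q || paired D2 p q.
Proof. by rewrite /paired !mem_cat orbACA. Qed.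

Record finposet X le : Prop := FinPoset {
  po_supp : forall p q, le p q -> (p \in X) && (q \in X);
  po_refl : forall p, p \in X -> le p p;
  po_anti : forall p q, le p q -> le q p -> p = q;
  po_trans : forall p q r, le p q -> le q r -> le p r }.

Record dup_forest X le D : Prop := DupForest {
  df_poset :> finposet X le;
  df_paired : forall p q, paired D p q -> ~~ le p q && [exists z, le z p && le z q];
  df_partner_uniq : forall p q r, paired D p q -> paired D p r -> q = r;
  df_lower_bound : forall x y z, le z x -> le z y -> [|| le x y, le y x | paired D x y] }.

Lemma mem_paired D x : x \in D -> paired D x.1 x.2.
Proof. by rewrite /paired -surjective_pairing => ->. Qed.

Lemma paired_pairset D p q : paired D p q -> [set p; q] \in [seq pairset x | x <- D].
Proof.
by case/orP=> [pq|qp]; apply/mapP; [exists (p, q) | exists (q, p); rewrite // /pairset setUC].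
Qed.

Section FinPoset.
Variables (X : {set T}) (le : rel T).
Hypothesis P : finposet X le.

Lemma po_meml p q : le p q -> p \in X. Proof. by case/(po_supp P)/andP. Qed.
Lemma po_memr p q : le p q -> q \in X. Proof. by case/(po_supp P)/andP. Qed.

Lemma po_outl p q : p \notin X -> le p q = false.
Proof. by apply: contraNF => /po_meml. Qed.

Lemma po_outr p q : q \notin X -> le p q = false.
Proof. by apply: contraNF => /po_memr. Qed.

Lemma card_down_lt p q : lt le p q -> #|down X le p| < #|down X le q|.
Proof.
case/andP=> pq npq; apply/proper_card/properP; split.
  by apply/subsetP => r; rewrite !inE => /andP[-> /(po_trans P)->].
exists q; rewrite !inE (po_memr pq) ?(po_refl P (po_memr pq)) //=.
by apply: contra npq => qp; rewrite (po_anti P pq qp).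
Qed.

Definition maximal_in J m := (m \in J) && [forall u in J, le m u ==> (u == m)].

Lemma maximal_inP J m : maximal_in J m -> m \in J /\ forall u, u \in J -> le m u -> u = m.
Proof.
case/andP=> mJ /forallP mmax; split=> // u uJ mu.
by apply/eqP; move: (mmax u); rewrite uJ mu.
Qed.

Lemma exists_maximal J v : v \in J -> v \in X -> exists2 m, maximal_in J m & le v m.
Proof.
move=> vJ /(po_refl P) vv.
have [m /andP[mJ vm] mmax] := @arg_maxnP T v (fun m => (m \in J) && le v m)
  (fun m => #|down X le m|) (introT andP (conj vJ vv)).
exists m => //; apply/andP; split=> //; apply/forallP => u; apply/implyP => uJ.
apply/implyP => mu; apply/contraT => num.
have := mmax u; rewrite uJ (po_trans P vm mu) => /(_ isT).
by rewrite /= leqNgt card_down_lt // /lt mu eq_sym.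
Qed.

Lemma exists_lower_cover z y : lt le z y -> exists2 w, le z w & covers X le w y.
Proof.
move=> zy; have [zX yX] : z \in X /\ y \in X by case/andP: zy => /(po_supp P)/andP.
have [w /andP[zw wy] wmax] := @arg_maxnP T z (fun w => le z w && lt le w y)
  (fun w => #|down X le w|) (introT andP (conj (po_refl P zX) zy)).
exists w => //; rewrite /covers (po_memr zw) yX wy /=.
apply/forallP => u; apply/implyP => _; apply/negP => /andP[wu uy].
have := wmax u; rewrite (po_trans P zw (andP wu).1) uy => /(_ isT).
by rewrite /= leqNgt card_down_lt.
Qed.

Lemma le_hasse_path z y : le z y ->
  exists w, [/\ path (hasse X le) z w, last z w = y & all (le^~ y) w].
Proof.
have [n] := ubnP #|down X le y|; elim: n y => // n IH y lt_y_n zy.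
have [<-|nzy] := eqVneq z y; first by exists [::].
have [w zw /[dup] wy /and4P[_ _ lt_wy _]] := exists_lower_cover (introT andP (conj zy nzy)).
have ltn_w : #|down X le w| < n := leq_trans (card_down_lt lt_wy) lt_y_n.
have [s [s_path s_last s_down]] := IH w ltn_w zw.
exists (rcons s y); rewrite rcons_path last_rcons all_rcons s_path s_last /hasse wy.
rewrite (po_refl P (po_memr zy)) /=; split=> //.
by apply: sub_all s_down => u /(po_trans P)->; case/andP: lt_wy.
Qed.

Lemma hanger_comparable a z y : hanger X le a -> le z a -> le z y -> le a y || le y a.
Proof.
case=> aX _ ahanger za zy; apply/contraT; rewrite negb_or => /andP[nay nya].
have nza : z != a by apply: contraNneq nay => <-.
have [w [w_path w_last w_down]] := le_hasse_path zy.
have z_sdown : z \in sdown X le a by rewrite inE (po_meml za) /lt za nza.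
have y_out : last z w \in X :\: down X le a by rewrite w_last !inE (po_memr zy) nya.
have := ahanger z w z_sdown w_path y_out.
by rewrite inE eq_sym (negPf nza) /= => /(allP w_down) ay; rewrite ay in nay.
Qed.
End FinPoset.

Lemma paired_mem X le D p q : dup_forest X le D -> paired D p q -> p \in X.
Proof. by move=> F /(df_paired F)/andP[_ /existsP[z /andP[/(po_memr F)]]]. Qed.

Lemma pairset_partner X le D x u : dup_forest X le D -> x \in D -> u \in pairset x ->
  exists2 v, paired D u v & pairset x = [set u; v].
Proof.
move=> F /mem_paired px; rewrite !inE => /orP[]/eqP->; first by exists x.2.
by exists x.1; rewrite 1?paired_sym // /pairset setUC.
Qed.

Lemma pairsets_disjoint X le D x y : dup_forest X le D -> x \in D -> y \in D ->
  pairset x = pairset y \/ [disjoint pairset x & pairset y].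
Proof.
move=> F xD yD; case: (boolP [disjoint _ & _]) => [|/pred0Pn[u /andP[ux uy]]]; first by right.
have [v uv ->] := pairset_partner F xD ux; have [w uw ->] := pairset_partner F yD uy.
by left; rewrite (df_partner_uniq F uv uw).
Qed.

(* Disjoint union is the case [up = pred0], hanging [X2] below [a] the case
   [up = le1 a]. *)
Section Glue.
Variables (X1 X2 : {set T}) (le1 le2 le : rel T) (D1 D2 : seq (T * T)) (up : pred T).
Hypotheses (F1 : dup_forest X1 le1 D1) (F2 : dup_forest X2 le2 D2).
Hypothesis X12 : [disjoint X1 & X2].
Hypothesis up_sub : forall q, up q -> q \in X1.
Hypothesis up_closed : forall q r, up q -> le1 q r -> up r.
Hypothesis up_lower_bound : forall x y, up x -> up y -> [|| le1 x y, le1 y x | paired D1 x y].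
Hypothesis leE : forall p q,
  le p q = if p \in X2 then (if q \in X2 then le2 p q else up q) else le1 p q.

Lemma glue_le1E p q : p \notin X2 -> le p q = le1 p q.
Proof. by move=> p2; rewrite leE (negPf p2). Qed.

Lemma glue_le2E p q : q \in X2 -> le p q = le2 p q.
Proof.
move=> q2; rewrite leE q2; case: ifP => // /negbT p2.
by rewrite (po_outl F2 _ p2) (po_outr F1) ?(disjointFl X12 q2).
Qed.

Lemma glue_upE p q : p \in X2 -> q \notin X2 -> le p q = up q.
Proof. by move=> p2 q2; rewrite leE p2 (negPf q2). Qed.

Lemma notin2 p : p \in X1 -> p \notin X2.
Proof. by move=> /(disjointFr X12)->. Qed.

Lemma glue_poset : finposet (X1 :|: X2) le.
Proof.
split.
- move=> p q; rewrite leE !inE; case: ifP => p2; first case: ifP => q2.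
  + by rewrite !orbT.
  + by move/up_sub => ->; rewrite orbT.
  + by case/(po_supp F1)/andP => -> ->.
- move=> p; rewrite inE => /orP[p1|p2].
    by rewrite glue_le1E ?notin2 // (po_refl F1).
  by rewrite glue_le2E // (po_refl F2).
- move=> p q; have [p2|p2] := boolP (p \in X2).
    move=> pq; rewrite glue_le2E // => qp; rewrite glue_le2E ?(po_meml F2 qp) // in pq.
    exact: (po_anti F2 pq qp).
  rewrite glue_le1E // => pq; rewrite glue_le1E ?notin2 ?(po_memr F1 pq) // => qp.
  exact: (po_anti F1 pq qp).
- move=> p q r; have [p2|p2] := boolP (p \in X2); last first.
    rewrite !(glue_le1E _ p2) => pq; rewrite glue_le1E ?notin2 ?(po_memr F1 pq) //.
    exact: (po_trans F1 pq).
  have [r2 pq|r2] := boolP (r \in X2).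
    rewrite !glue_le2E // => qr; rewrite glue_le2E ?(po_meml F2 qr) // in pq.
    exact: (po_trans F2 pq qr).
  rewrite (glue_upE p2 r2); have [q2|q2] := boolP (q \in X2).
    by rewrite (glue_upE q2 r2).
  by rewrite (glue_upE p2 q2) (glue_le1E _ q2) => uq /(up_closed uq).
Qed.

Lemma glue_comparable1 x y : x \in X1 -> y \in X1 ->
  [|| le1 x y, le1 y x | paired D1 x y] -> [|| le x y, le y x | paired (D1 ++ D2) x y].
Proof. by move=> x1 y1; rewrite !glue_le1E ?notin2 // paired_cat => /or3P[]->; rewrite ?orbT. Qed.

Lemma glue_comparable2 x y : x \in X2 -> y \in X2 ->
  [|| le2 x y, le2 y x | paired D2 x y] -> [|| le x y, le y x | paired (D1 ++ D2) x y].
Proof. by move=> x2 y2; rewrite !glue_le2E // paired_cat => /or3P[]->; rewrite ?orbT. Qed.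

Lemma dup_forest_glue : dup_forest (X1 :|: X2) le (D1 ++ D2).
Proof.
split; first exact: glue_poset.
- move=> p q; rewrite paired_cat => /orP[pq|pq].
    have /andP[npq /existsP[z /andP[zp zq]]] := df_paired F1 pq.
    rewrite glue_le1E ?notin2 ?(paired_mem F1 pq) // npq.
    by apply/existsP; exists z; rewrite !glue_le1E ?notin2 ?zp ?(po_meml F1 zp).
  have /andP[npq /existsP[z /andP[zp zq]]] := df_paired F2 pq.
  rewrite glue_le2E ?npq ?(po_memr F2 zq) //.
  by apply/existsP; exists z; rewrite !glue_le2E ?zp ?zq ?(po_memr F2 zp) ?(po_memr F2 zq).
- move=> p q r; rewrite !paired_cat => /orP[pq|pq] /orP[pr|pr].
  + exact: (df_partner_uniq F1 pq pr).
  + by move: (notin2 (paired_mem F1 pq)); rewrite (paired_mem F2 pr).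
  + by move: (notin2 (paired_mem F1 pr)); rewrite (paired_mem F2 pq).
  + exact: (df_partner_uniq F2 pq pr).
- move=> x y z; have [z2|z2] := boolP (z \in X2); last first.
    rewrite !(glue_le1E _ z2) => zx zy; apply: glue_comparable1.
    + exact: (po_memr F1 zx).
    + exact: (po_memr F1 zy).
    + exact: (df_lower_bound F1 zx zy).
  have [x2|x2] := boolP (x \in X2); have [y2|y2] := boolP (y \in X2).
  + rewrite (glue_le2E _ x2) (glue_le2E _ y2) => zx zy; apply: glue_comparable2 => //.
    exact: (df_lower_bound F2 zx zy).
  + by rewrite (glue_upE z2 y2) (glue_upE x2 y2) => _ ->.
  + by rewrite (glue_upE z2 x2) (glue_upE y2 x2) => ->; rewrite orbT.
  + rewrite (glue_upE z2 x2) (glue_upE z2 y2) => ux uy.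
    apply: glue_comparable1; rewrite ?up_sub //.
    exact: up_lower_bound.
Qed.
End Glue.

Lemma dup_forest_union X1 le1 D1 X2 le2 D2 :
  dup_forest X1 le1 D1 -> dup_forest X2 le2 D2 -> [disjoint X1 & X2] ->
  dup_forest (X1 :|: X2) (le_union le1 le2) (D1 ++ D2).
Proof.
move=> F1 F2 X12; apply: (dup_forest_glue F1 F2 X12 (up := pred0)) => // p q.
rewrite /le_union; case: ifP => [p2|/negbT p2]; last by rewrite (po_outl F2 _ p2) orbF.
rewrite (po_outl F1 _ (negbT (disjointFl X12 p2))) /=.
by case: ifP => // /negbT q2; rewrite (po_outr F2 _ q2).
Qed.

Lemma dup_forest_hang X1 le1 D1 X2 le2 D2 a :
  dup_forest X1 le1 D1 -> dup_forest X2 le2 D2 -> [disjoint X1 & X2] -> a \in X1 ->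
  dup_forest (X1 :|: X2) (le_hang le1 X2 le2 a) (D1 ++ D2).
Proof.
move=> F1 F2 X12 a1; apply: (dup_forest_glue F1 F2 X12 (up := le1 a)).
- by move=> q /(po_memr F1).
- by move=> q r; apply: (po_trans F1).
- by move=> x y ax ay; apply: (df_lower_bound F1 ax ay).
move=> p q; rewrite /le_hang; case: ifP => [p2|/negbT p2]; last first.
  by rewrite (po_outl F2 _ p2) !orbF.
rewrite (po_outl F1 _ (negbT (disjointFl X12 p2))) /=.
case: ifP => [q2|/negbT q2]; last by rewrite (po_outr F2 _ q2).
by rewrite (po_outr F1 _ (negbT (disjointFl X12 q2))) orbF.
Qed.

Section Duplicate.
Variables (X : {set T}) (le : rel T) (D : seq (T * T)) (a a' : T).
Hypotheses (F : dup_forest X le D) (a_hanger : hanger X le a) (a'X : a' \notin X).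

Let le' := le_dup le a a'.
Let merge p := if p == a' then a else p.

Lemma hanger_mem : a \in X. Proof. by case: a_hanger. Qed.

Lemma hanger_neq : a != a'. Proof. by apply: contraNneq a'X => <-; apply: hanger_mem. Qed.

Lemma merge_id p : p \in X -> merge p = p.
Proof. by move=> pX; rewrite /merge ifN //; apply: contraNneq a'X => <-. Qed.

Lemma merge_mem p : (merge p \in X) = (p \in a' |: X).
Proof. by rewrite /merge in_setU1; case: eqVneq => //= _; rewrite hanger_mem. Qed.

Lemma le_dupE p q : le' p q = le (merge p) (merge q) && ((merge p != merge q) || (p == q)).
Proof.
have le_a'l r : le a' r = false := po_outl F r a'X.
have le_a'r r : le r a' = false := po_outr F r a'X.
rewrite /le' /le_dup /merge; case: (eqVneq p a') => [->|npa]; case: (eqVneq q a') => [->|nqa].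
all: rewrite ?le_a'l ?le_a'r ?eqxx ?(negPf npa) ?(negPf nqa) /= ?orbF ?andbT.
- by rewrite (po_refl F hanger_mem).
- by rewrite andbC eq_sym.
- by rewrite andbC.
- by rewrite orNb andbT.
Qed.

Lemma paired_dupE p q :
  paired ((a, a') :: D) p q = (merge p == merge q) && (p != q) || paired D p q.
Proof.
rewrite /paired !in_cons orbACA; congr (_ || _); rewrite /merge !xpair_eqE.
have aa' := hanger_neq; rewrite eq_sym in aa'.
case: (eqVneq p a') => [->|npa]; case: (eqVneq q a') => [->|nqa] //=.
all: rewrite ?(negPf aa') ?(negPf npa) ?(negPf nqa) ?eqxx /= ?andbT ?andbF ?orbF ?andbN // eq_sym.
Qed.

Lemma merge_collapse p q : merge p = merge q -> p != q -> merge p = a.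
Proof.
rewrite /merge; case: (eqVneq p a') => // _; case: (eqVneq q a') => // _ -> .
by rewrite eqxx.
Qed.

Lemma merge_partner p q : merge p = merge q -> p != q -> q = if p == a' then a else a'.
Proof.
rewrite /merge; case: (eqVneq p a') => [->|npa]; case: (eqVneq q a') => [->|nqa] //.
by move=> ->; rewrite eqxx.
Qed.

Lemma hanger_unpaired q : ~~ paired D a q.
Proof.
apply/negP => aq; have /andP[naq /existsP[z /andP[za zq]]] := df_paired F aq.
have /andP[nqa _] := df_paired F (etrans (paired_sym D q a) aq).
by have := hanger_comparable F a_hanger za zq; rewrite (negPf naq) (negPf nqa).
Qed.

Lemma merge_paired u v : paired D (merge u) v -> merge u = u.
Proof. by rewrite /merge; case: eqVneq => // _ /negP[]; apply/negP; exact: hanger_unpaired. Qed.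

Lemma le_dup_old p q : p \in X -> q \in X -> le' p q = le p q.
Proof. by move=> pX qX; rewrite le_dupE !merge_id // orNb andbT. Qed.

Lemma le_dup_merge x y : le (merge x) (merge y) -> le' x y || paired ((a, a') :: D) x y.
Proof.
move=> lxy; rewrite le_dupE paired_dupE lxy /=.
by case: (eqVneq (merge x) (merge y)) => //= _; case: eqVneq.
Qed.

Lemma dup_poset : finposet (a' |: X) le'.
Proof.
split.
- by move=> p q; rewrite le_dupE -!merge_mem => /andP[/(po_supp F)].
- by move=> p; rewrite -merge_mem le_dupE !eqxx orbT andbT => /(po_refl F).
- move=> p q; rewrite !le_dupE => /andP[pq /orP[npq|/eqP//]] /andP[qp _].
  by rewrite (po_anti F pq qp) eqxx in npq.
- move=> p q r; rewrite !le_dupE => /andP[pq epq] /andP[qr eqr].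
  rewrite (po_trans F pq qr) /=; case: (eqVneq (merge p) (merge r)) => //= epr.
  rewrite -epr in qr; have mpq := po_anti F pq qr.
  rewrite mpq eqxx /= in epq; rewrite -mpq epr eqxx /= in eqr.
  by rewrite (eqP epq) (eqP eqr).
Qed.

Lemma dup_forest_dup : dup_forest (a' |: X) le' ((a, a') :: D).
Proof.
split; first exact: dup_poset.
- move=> p q; rewrite paired_dupE => /orP[/andP[/eqP mpq npq]|pq].
    rewrite le_dupE mpq eqxx (negPf npq) andbF /=.
    have mpa := merge_collapse mpq npq.
    case: a_hanger => _ /set0Pn[z]; rewrite inE => /andP[zX /andP[za nza]] _.
    by apply/existsP; exists z; rewrite !le_dupE merge_id // -mpq mpa za nza.
  have /andP[npq /existsP[z /andP[zp zq]]] := df_paired F pq.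
  have zX := po_meml F zp; have pX := po_memr F zp; have qX := po_memr F zq.
  by rewrite le_dup_old // npq; apply/existsP; exists z; rewrite !le_dup_old ?zp.
- move=> p q r; rewrite !paired_dupE.
  move=> /orP[/andP[/eqP mpq npq]|pq] /orP[/andP[/eqP mpr npr]|pr].
  + by rewrite (merge_partner mpq npq) (merge_partner mpr npr).
  + move: (hanger_unpaired r).
    by rewrite -(merge_collapse mpq npq) (merge_id (paired_mem F pr)) pr.
  + move: (hanger_unpaired q).
    by rewrite -(merge_collapse mpr npr) (merge_id (paired_mem F pq)) pq.
  + exact: (df_partner_uniq F pq pr).
- move=> x y z; rewrite !(le_dupE z) => /andP[zx _] /andP[zy _].
  case/or3P: (df_lower_bound F zx zy) => [xy|yx|pxy].
  + by have /orP[->|->] := le_dup_merge xy; rewrite ?orbT.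
  + by have /orP[->|] := le_dup_merge yx; rewrite ?orbT // paired_sym => ->; rewrite !orbT.
  + have pyx : paired D (merge y) (merge x) by rewrite paired_sym.
    have [mx my] := (merge_paired pxy, merge_paired pyx); rewrite mx my in pxy.
    by rewrite paired_dupE pxy !orbT.
Qed.
End Duplicate.

Lemma dup_forest_one x : dup_forest [set x] (le_one x) [::].
Proof.
split=> //; last by move=> ? ? ? /andP[_ /eqP->] /andP[_ /eqP->]; rewrite /le_one eqxx.
split; rewrite /le_one.
- by move=> p q /andP[/eqP-> /eqP->]; rewrite inE eqxx.
- by move=> p; rewrite inE => ->.
- by move=> p q /andP[/eqP-> /eqP->].
- by move=> p q r /andP[-> _] /andP[_ ->].
Qed.

Lemma fwd_dup_forest X le D : fwd X le D -> dup_forest X le D.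
Proof.
elim=> {X le D}.
- exact: dup_forest_one.
- by move=> X1 le1 D1 X2 le2 D2 _ F1 _ F2; apply: dup_forest_union.
- by move=> X1 le1 D1 X2 le2 D2 a _ F1 _ F2; apply: dup_forest_hang.
- by move=> X le D a a' _ F; apply: dup_forest_dup.
Qed.

Section ConnectedIdeals.
Variables (le : rel T) (D : seq (T * T)).
Hypothesis F : dup_forest [set: T] le D.

Local Notation dn := (down [set: T] le).
Local Notation ideal := (order_ideal [set: T] le).
Local Notation cideal := (connected_ideal [set: T] le).

Definition hasse_in J : rel T := fun u v => [&& u \in J, v \in J & hasse [set: T] le u v].

Lemma hasse_in_sym J : symmetric (hasse_in J).
Proof. by move=> u v; rewrite /hasse_in /hasse andbCA orbC. Qed.

Lemma connect_hasse_in_sym J : connect_sym (hasse_in J).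
Proof. exact/sym_connect_sym/hasse_in_sym. Qed.

Lemma path_hasse_in J x w :
  x \in J -> path (hasse_in J) x w = path (hasse [set: T] le) x w && all (mem J) w.
Proof.
elim: w x => //= v w IH x xJ; rewrite /hasse_in xJ /=.
by case vJ: (v \in J); rewrite ?andbF // IH // andbA.
Qed.

Lemma connected_idealE J : cideal J <->
  [/\ J != set0, ideal J & {in J &, forall x y, connect (hasse_in J) x y}].
Proof.
split=> -[J0 idJ conJ]; split=> // x y xJ yJ.
  have [w [w_path <- w_in]] := conJ x y xJ yJ.
  by apply/connectP; exists w; rewrite ?path_hasse_in ?w_path.
case/connectP: (conJ x y xJ yJ) => w; rewrite path_hasse_in // => /andP[w_path w_in] ->.
by exists w.
Qed.

Lemma le_refl p : le p p. Proof. exact: (po_refl F (in_setT p)). Qed.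

Lemma mem_down p q : (q \in dn p) = le q p. Proof. by rewrite inE in_setT. Qed.

Lemma order_idealP J : reflect (forall p q, q \in J -> le p q -> p \in J) (ideal J).
Proof.
apply: (iffP andP) => [[_ /forallP idJ] p q qJ pq|idJ].
  by move/implyP/(_ qJ)/forallP/(_ p): (idJ q); rewrite in_setT pq.
split; first exact: subsetT.
apply/forallP => q; apply/implyP => qJ; apply/forallP => p; apply/implyP => _.
by apply/implyP; apply: idJ.
Qed.

Lemma down_subset J p : ideal J -> p \in J -> dn p \subset J.
Proof. by move=> /order_idealP idJ pJ; apply/subsetP => q; rewrite mem_down; apply: idJ. Qed.

Lemma down_ideal p : ideal (dn p).
Proof. by apply/order_idealP => r q; rewrite !mem_down => qp rq; apply: (po_trans F rq qp). Qed.

Lemma connect_down J x p : x \in J -> le x p -> dn p \subset J -> connect (hasse_in J) x p.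
Proof.
move=> xJ xp /subsetP dnJ; have [w [w_path w_last w_down]] := le_hasse_path F xp.
apply/connectP; exists w => //; rewrite path_hasse_in // w_path.
by apply/allP => u /(allP w_down) up; apply: dnJ; rewrite mem_down.
Qed.

Lemma connect_mono J1 J2 x y :
  J1 \subset J2 -> connect (hasse_in J1) x y -> connect (hasse_in J2) x y.
Proof.
move=> /subsetP J12; apply: connect_sub => u v /and3P[uJ vJ uv].
by apply: connect1; rewrite /hasse_in uv !J12.
Qed.

Lemma down_connected_ideal p : cideal (dn p).
Proof.
apply/connected_idealE; split; last 1 first.
- move=> x y; rewrite !mem_down => xp yp.
  apply: connect_trans (connect_down _ xp (subxx _)) _; first by rewrite mem_down.
  by rewrite connect_hasse_in_sym // connect_down ?mem_down.
- by apply/set0Pn; exists p; rewrite mem_down le_refl.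
- exact: down_ideal.
Qed.

Lemma connected_idealU J1 J2 :
  cideal J1 -> cideal J2 -> ~~ [disjoint J1 & J2] -> cideal (J1 :|: J2).
Proof.
move=> /connected_idealE[_ /order_idealP id1 con1] /connected_idealE[_ /order_idealP id2 con2].
case/pred0Pn => z /andP[z1 z2].
have toz x : x \in J1 :|: J2 -> connect (hasse_in (J1 :|: J2)) x z.
  case/setUP => xJ; [apply: connect_mono (subsetUl _ _) (con1 _ _ xJ z1)|
                      apply: connect_mono (subsetUr _ _) (con2 _ _ xJ z2)].
apply/connected_idealE; split.
- by apply/set0Pn; exists z; apply/setUP; left.
- apply/order_idealP => p q /setUP[qJ|qJ] pq; rewrite inE.
    by rewrite (id1 _ _ qJ pq).
  by rewrite (id2 _ _ qJ pq) orbT.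
- move=> x y xJ yJ; apply: connect_trans (toz _ xJ) _.
  by rewrite connect_hasse_in_sym ?toz.
Qed.

Lemma down_inj : injective dn.
Proof.
move=> p q e; apply: (po_anti F).
  by rewrite -mem_down -e mem_down le_refl.
by rewrite -mem_down e mem_down le_refl.
Qed.

Lemma paired_down_meet p q : paired D p q -> ~~ [disjoint dn p & dn q].
Proof.
case/(df_paired F)/andP => _ /existsP[z /andP[zp zq]].
by apply/pred0Pn; exists z; rewrite /= !mem_down zp.
Qed.

Lemma connected_ideal_cover J m u : cideal J -> maximal_in le J m -> u \in J ->
  exists2 c, maximal_in le J c & le u c && ((c == m) || paired D m c).
Proof.
move=> /connected_idealE[_ _ conJ] mmax uJ; have [mJ _] := maximal_inP mmax.
pose S := [pred v | [exists c, [&& maximal_in le J c, le v c & (c == m) || paired D m c]]].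
suff: u \in S by case/existsP=> c /and3P[cmax uc cm]; exists c; rewrite ?uc.
have S_closed : closed (hasse_in J) S.
  apply: (intro_closed (connect_hasse_in_sym J)).
  move=> v w /and3P[vJ wJ /orP[]/and4P[_ _ /andP[le_vw _] _]] /existsP[c /and3P[cmax vc cm]].
    have [c2 c2max wc2] := exists_maximal F wJ (in_setT w).
    have [cJ ctop] := maximal_inP cmax; have [c2J c2top] := maximal_inP c2max.
    apply/existsP; case/or3P: (df_lower_bound F vc (po_trans F le_vw wc2)) => [cc2|c2c|pcc2].
    - by exists c; rewrite cmax cm -(ctop _ c2J cc2) wc2.
    - by exists c; rewrite cmax cm (c2top _ cJ c2c) wc2.
    exists c2; rewrite c2max wc2 /=; case/orP: cm => [/eqP<-|mc]; first by rewrite pcc2 orbT.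
    by rewrite (df_partner_uniq F (etrans (paired_sym D c m) mc) pcc2) eqxx.
  by apply/existsP; exists c; rewrite cmax cm (po_trans F le_vw vc).
rewrite -(closed_connect S_closed (conJ m u mJ uJ)).
by apply/existsP; exists m; rewrite mmax le_refl eqxx.
Qed.

Lemma connected_ideal_max J m : cideal J -> maximal_in le J m ->
  J = dn m \/ exists2 c, paired D m c & J = dn m :|: dn c.
Proof.
move=> cJ mmax; have [mJ _] := maximal_inP mmax.
have idJ : ideal J by case/connected_idealE: cJ.
case: (pickP [pred c | maximal_in le J c && paired D m c]) => [c /andP[cmax mc]|nopair].
  have [c_in _] := maximal_inP cmax.
  right; exists c => //; apply/eqP.
  rewrite eqEsubset subUset (down_subset idJ mJ) (down_subset idJ c_in) !andbT.
  apply/subsetP => u uJ.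
  have [c' c'max /andP[uc' /orP[/eqP<-|mc']]] := connected_ideal_cover cJ mmax uJ.
    by rewrite inE mem_down uc'.
  by rewrite inE !mem_down (df_partner_uniq F mc mc') uc' orbT.
left; apply/eqP; rewrite eqEsubset (down_subset idJ mJ) andbT.
apply/subsetP => u uJ.
have [c' c'max /andP[uc' /orP[/eqP<-|mc']]] := connected_ideal_cover cJ mmax uJ.
  by rewrite mem_down.
by have := nopair c'; rewrite /= c'max mc'.
Qed.

Lemma connected_idealP J : cideal J <->
  (exists p, J = dn p) \/ (exists2 x, x \in D & J = dn x.1 :|: dn x.2).
Proof.
split=> [cJ|[[p ->]|[x /mem_paired px ->]]].
- have [v vJ] : exists v, v \in J by case/connected_idealE: cJ => /set0Pn.
  have [m mmax _] := exists_maximal F vJ (in_setT v).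
  case: (connected_ideal_max cJ mmax) => [->|[c /orP[mc|cm] ->]]; first by left; exists m.
    by right; exists (m, c).
  by right; exists (c, m); rewrite // setUC.
- exact: down_connected_ideal.
- exact: connected_idealU (down_connected_ideal _) (down_connected_ideal _) (paired_down_meet px).
Qed.

Lemma connected_ideal_below_pair J b b' : paired D b b' -> cideal J ->
  J \subset dn b :|: dn b' -> b \in J -> b' \notin J -> J = dn b.
Proof.
move=> bb' cJ /subsetP Jsub bJ b'J.
have /andP[nbb' _] := df_paired F bb'.
have bmax : maximal_in le J b.
  apply/andP; split=> //; apply/forallP => u; apply/implyP => uJ; apply/implyP => bu.
  move: (Jsub u uJ); rewrite inE !mem_down => /orP[ub|ub']; first by rewrite (po_anti F ub bu).
  by rewrite (po_trans F bu ub') in nbb'.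
case: (connected_ideal_max cJ bmax) => [//|[c bc Jeq]].
by move: b'J; rewrite (df_partner_uniq F bb' bc) Jeq inE !mem_down le_refl orbT.
Qed.

Lemma nontrivial_connected_ideals J1 J2 : cideal J1 -> cideal J2 ->
  ~~ intersect_trivially J1 J2 -> exists b b', [/\ paired D b b', J1 = dn b & J2 = dn b'].
Proof.
rewrite /intersect_trivially => cJ1 cJ2 /norP[J12 /norP[n12 n21]].
have cU := connected_idealU cJ1 cJ2 J12.
have [id1 id2] : ideal J1 /\ ideal J2 by case/connected_idealE: cJ1; case/connected_idealE: cJ2.
have U1 : ~~ (J1 :|: J2 \subset J1) by apply: contra n21; apply: subset_trans (subsetUr _ _).
have U2 : ~~ (J1 :|: J2 \subset J2) by apply: contra n12; apply: subset_trans (subsetUl _ _).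
have [v vU] : exists v, v \in J1 :|: J2 by case/connected_idealE: cU => /set0Pn.
have [m mmax _] := exists_maximal F vU (in_setT v); have [mU _] := maximal_inP mmax.
case: (connected_ideal_max cU mmax) => [Ueq|[c mc Ueq]].
  by case/setUP: mU => mJ; [case/negP: U1 | case/negP: U2]; rewrite Ueq down_subset.
have Usub Ja : ideal Ja -> m \in Ja -> c \in Ja -> J1 :|: J2 \subset Ja.
  by move=> idJ mJ cJ; rewrite Ueq subUset !(down_subset idJ).
have split_pair b b' : paired D b b' -> J1 :|: J2 = dn b :|: dn b' ->
    b \in J1 -> b' \in J2 -> b \notin J2 -> b' \notin J1 ->
    exists b b', [/\ paired D b b', J1 = dn b & J2 = dn b'].
  move=> bb' U_bb' b1 b'2 b2 b'1; exists b, b'; split=> //.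
    by apply: (connected_ideal_below_pair bb') => //; rewrite -U_bb' subsetUl.
  apply: (connected_ideal_below_pair (b' := b)) => //; first by rewrite paired_sym.
  by rewrite setUC -U_bb' subsetUr.
have cU' : c \in J1 :|: J2 by rewrite Ueq inE !mem_down le_refl orbT.
case/setUP: mU => [m1|m2]; case/setUP: cU' => [c1|c2].
- by case/negP: U1; apply: Usub.
- by apply: (split_pair m c) => //; [apply: contra U2 => m2 | apply: contra U1 => c1];
    apply: Usub.
- apply: (split_pair c m) => //; first by rewrite paired_sym.
  + by rewrite Ueq setUC.
  + by apply: contra U2 => c2; apply: Usub.
  + by apply: contra U1 => m1; apply: Usub.
- by case/negP: U2; apply: Usub.
Qed.

Lemma paired_nontrivial p q : paired D p q ->
  [/\ cideal (dn p), cideal (dn q) & ~~ intersect_trivially (dn p) (dn q)].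
Proof.
move=> pq; have /andP[npq _] := df_paired F pq.
have /andP[nqp _] := df_paired F (etrans (paired_sym D q p) pq).
split; [exact: down_connected_ideal | exact: down_connected_ideal|].
apply/norP; split; first exact: paired_down_meet.
apply/norP; split; apply/negP => /subsetP.
  by move/(_ p); rewrite !mem_down le_refl (negPf npq) => /(_ isT).
by move/(_ q); rewrite !mem_down le_refl (negPf nqp) => /(_ isT).
Qed.

End ConnectedIdeals.

Lemma pairsets_subset le D1 D2 :
  dup_forest [set: T] le D1 -> dup_forest [set: T] le D2 ->
  {subset [seq pairset x | x <- D1] <= [seq pairset x | x <- D2]}.
Proof.
move=> F1 F2 _ /mapP[x /mem_paired px ->].
have [c1 c2 nt] := paired_nontrivial F1 px.
have [b [b' [bb' e1 e2]]] := nontrivial_connected_ideals F2 c1 c2 nt.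
by rewrite /pairset (down_inj F2 e1) (down_inj F2 e2) paired_pairset.
Qed.

End ForestsWithDuplications.

Theorem lemma4p1 (T : finType) (le : rel T) (D : seq (T * T)) :
  fwd [set: T] le D ->
  [/\ (* (i) *)
      (forall x y, x \in D -> y \in D ->
         pairset x = pairset y \/ [disjoint pairset x & pairset y]),
      (* (ii) *)
      (forall J : {set T},
         connected_ideal [set: T] le J <->
         (exists p, J = down [set: T] le p) \/
         (exists2 x, x \in D & J = down [set: T] le x.1 :|: down [set: T] le x.2)),
      (* (iii) *)
      (forall J1 J2 : {set T},
         [/\ connected_ideal [set: T] le J1, connected_ideal [set: T] le J2
           & ~~ intersect_trivially J1 J2] <->
         exists2 x, x \in D &
           (J1 = down [set: T] le x.1 /\ J2 = down [set: T] le x.2) \/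
           (J1 = down [set: T] le x.2 /\ J2 = down [set: T] le x.1))
    & (* in particular: independence of the construction *)
      (forall D' : seq (T * T), fwd [set: T] le D' ->
         [seq pairset x | x <- D] =i [seq pairset x | x <- D'])].
Proof.
move=> /fwd_dup_forest F; split.
- by move=> x y xD yD; apply: (pairsets_disjoint F).
- exact: connected_idealP.
- move=> J1 J2; split=> [[c1 c2 /(nontrivial_connected_ideals F c1 c2)]|[x /mem_paired px]].
    case=> b [b' [/orP[bb'|b'b] -> ->]]; first by exists (b, b'); [|left].
    by exists (b', b); [|right].
  by case=> [[-> ->]|[-> ->]]; apply: (paired_nontrivial F); rewrite // paired_sym.
- move=> D' /fwd_dup_forest F' S.
  by apply/idP/idP; [apply: (pairsets_subset F F') | apply: (pairsets_subset F' F)].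
Qed.
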